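(* Let $\mathcal T\in\mathbb R^{I_1\times\cdots\times I_N}$ and let $R\le\min_n I_n$. On tuples $(\mathbf X^{(1)},\dots,\mathbf X^{(N)})$ with $\mathbf X^{(n)}\in\mathbb R^{I_n\times R}$ of full column rank define $$\mathcal L(\mathbf X^{(1)},\dots,\mathbf X^{(N)})=\sum_{r=1}^R\sum_{i_1,\dots,i_N}t_{i_1\dots i_N}x^{(1)}_{i_1r}\cdots x^{(N)}_{i_Nr}-\tfrac12\sum_{n=1}^N\log\det\big(\mathbf X^{(n)T}\mathbf X^{(n)}\big).$$ Then the tuple is a critical point of $\mathcal L$ if and only if $\mathbf T_{(n)}\big(\bigodot_{m\ne n}\mathbf X^{(m)}\big)=\mathbf X^{(n)}(\mathbf X^{(n)T}\mathbf X^{(n)})^{-1}$ for every $n$. Moreover, at any critical point: (i) for every $i\in\{1,\dots,N\}$ and every $r\in\{1,\dots,R\}$, the vector $\mathbf w\in\mathbb R^{I_i}$ with entries $w_{a}=\sum_{i_j,\,j\ne i}t_{i_1\dots i_{i-1}\,a\,i_{i+1}\dots i_N}\prod_{j\ne i}x^{(j)}_{i_j r}$ lies in the column span of $\mathbf X^{(i)}$; (ii) the tensor $\mathcal Z$ with entries $z_{j_1\dots j_N}=\sum_{i_1,\dots,i_N}t_{i_1\dots i_N}x^{(1)}_{i_1j_1}\cdots x^{(N)}_{i_Nj_N}$ satisfies, for every $p\in\{1,\dots,N\}$ and all $r,s\in\{1,\dots,R\}$, $z_{j_1\dots j_N}=\delta_{rs}$ whenever $j_m=r$ for all $m\ne p$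 and $j_p=s$; (iii) with $\mathcal Y=[\![\mathbf X^{(1)},\dots,\mathbf X^{(N)}]\!]$, for each $i$ the $I_i\times I_i$ matrix $\mathbf T_{(i)}\mathbf Y_{(i)}^T$, with entries $\sum_{i_j,\,j\ne i}t_{\dots a\dots}\,y_{\dots b\dots}$ (index $a$, resp. $b$, in mode $i$ and all other indices summed), equals $\mathbf X^{(i)}\mathbf X^{(i)\dagger}$, the orthogonal projector onto the column space of $\mathbf X^{(i)}$.
   Context: $[\![\mathbf B^{(1)},\dots,\mathbf B^{(N)}]\!]$ denotes the tensor with entries $\sum_{r=1}^R\prod_{m}b^{(m)}_{i_m r}$. For matrices $\mathbf C^{(m)}\in\mathbb R^{I_m\times R}$ ($m\ne n$), $\mathbf T_{(n)}\big(\bigodot_{m\ne n}\mathbf C^{(m)}\big)$ denotes the $I_n\times R$ matrix with entries $\sum_{i_m,\,m\ne n}t_{i_1\dots i_N}\prod_{m\ne n}c^{(m)}_{i_m r}$. $\mathbf M^\dagger$ is the Moore–Penrose pseudoinverse; $\delta_{rs}$ is the Kronecker delta. *)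

From HB Require Import structures.
From mathcomp Require Import all_boot all_order all_algebra.
From mathcomp Require Import boolp classical_sets reals topology normedtype derive exp.
Set Implicit Arguments. Unset Strict Implicit. Unset Printing Implicit Defensive.
Import Order.TTheory GRing.Theory Num.Theory numFieldNormedType.Exports.
Local Open Scope ring_scope.

Section TensorDefs.
Variable R : realType.
Variable N : nat.
Variable I : 'I_N -> nat.
Variable Rk : nat.

Definition midx := {dffun forall n : 'I_N, 'I_(I n)}.
Definition tensor := midx -> R.
Definition factors := forall n : 'I_N, 'M[R]_(I n, Rk).

Definition tfit (T : tensor) (X : factors) : R :=
  \sum_(r < Rk) \sum_(idx : midx) T idx * \prod_(n < N) X n (idx n) r.

Definition lossL (T : tensor) (X : factors) : R :=
  tfit T X - 2^-1 * \sum_(n < N) ln (\det ((X n)^T *m X n)).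

Definition critical (T : tensor) (X : factors) : Prop :=
  forall E : factors,
    let f := fun t : R => lossL T (fun n => X n + t *: E n) in
    derivable f 0 1 /\ 'D_1 f 0 = 0.

(* T_(n) (Khatri-Rao_{m <> n} X^(m)) : an I_n x R matrix *)
Definition mttkrp (T : tensor) (X : factors) (n : 'I_N) : 'M[R]_(I n, Rk) :=
  \matrix_(a < I n, r < Rk)
     \sum_(idx : midx | idx n == a) T idx * \prod_(m < N | m != n) X m (idx m) r.

Definition ztensor (T : tensor) (X : factors) (j : {ffun 'I_N -> 'I_Rk}) : R :=
  \sum_(idx : midx) T idx * \prod_(m < N) X m (idx m) (j m).

Definition cpd (X : factors) (idx : midx) : R :=
  \sum_(r < Rk) \prod_(m < N) X m (idx m) r.

Definition unfold_prod (T Y : tensor) (i : 'I_N) : 'M[R]_(I i) :=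
  \matrix_(a < I i, b < I i)
    \sum_(idx : midx | idx i == a)
      \sum_(idx' : midx | (idx' i == b) && [forall j, (j != i) ==> (idx j == idx' j)])
        T idx * Y idx'.
End TensorDefs.

Definition penrose (R : realType) m n (A : 'M[R]_(m, n)) (B : 'M[R]_(n, m)) : Prop :=
  [/\ A *m B *m A = A, B *m A *m B = B,
      (A *m B)^T = A *m B & (B *m A)^T = B *m A].

Definition mp_pinv (R : realType) m n (A : 'M[R]_(m, n)) : 'M[R]_(n, m) :=
  match pselect (exists B, penrose A B) with
  | left h => projT1 (cid h)
  | right _ => 0
  end.

From HB Require Import structures.
From mathcomp Require Import all_boot all_order all_algebra.
From mathcomp Require Import boolp classical_sets reals topology normedtype derive exp.
From mathcomp Require Import functions realfun perm.
Import Order.TTheory GRing.Theory Num.Theory numFieldNormedType.Exports.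
Set Implicit Arguments. Unset Strict Implicit.
Local Open Scope ring_scope.

(* The derivative of L at X in the direction E is sum_n tr (E^(n)T G^(n)), with
   gradient G^(n) = T_(n)(KR_{m<>n} X^(m)) - X^(n) (X^(n)T X^(n))^-1 (KR the
   Khatri-Rao product): the multilinear term is differentiated by the product
   rule, the log-determinant by Jacobi's formula d ln det G = tr (G^-1 dG), which
   applies because the Gram matrix of a full column rank matrix has positive
   determinant.  Taking E = G shows that X is critical iff G vanishes.  The three
   consequences are rewritings of G = 0: the slices of Z in (ii) are entries of
   X^(p)T T_(p)(KR X) = 1, the matrix of (iii) factors as T_(i)(KR X) X^(i)T,
   and for full column rank X^+ = (X^T X)^-1 X^T. *)

Section DeriveRules.
Variables (R : numFieldType) (x : R).

Lemma is_derive_sumr (J : finType) (P : pred J) (h : J -> R -> R) (dh : J -> R) :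
  (forall i, is_derive x 1 (h i) (dh i)) ->
  is_derive x 1 (fun t => \sum_(i | P i) h i t) (\sum_(i | P i) dh i).
Proof.
move=> hd; rewrite -fct_sumE.
elim/big_ind2: _ => [|f df g dg ? ?|//]; first exact: is_derive_cst.
exact: is_deriveD.
Qed.

Lemma is_derive_mull (c : R) (f : R -> R) (df : R) :
  is_derive x 1 f df -> is_derive x 1 (fun t => c * f t) (c * df).
Proof.
move=> hf; have := is_deriveM (is_derive_cst c x 1) hf.
by rewrite scaler0 addr0.
Qed.

Lemma is_derive_affine (a b : R) : is_derive x 1 (fun t => a + t * b) b.
Proof.
have := is_deriveD (is_derive_cst a x 1)
  (is_deriveM (is_derive_id x 1) (is_derive_cst b x 1)).
by move=> /is_derive_eq; apply; rewrite scaler0 !add0r scaler1.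
Qed.

Lemma is_derive_prodr (J : finType) (P : pred J) (h : J -> R -> R) (dh : J -> R) :
  (forall i, is_derive x 1 (h i) (dh i)) ->
  is_derive x 1 (fun t => \prod_(i | P i) h i t)
     (\sum_(i | P i) dh i * \prod_(j | P j && (j != i)) h j x).
Proof.
move=> hd; move: {2}#|P| (erefl #|P|) => n; elim: n P => [|n IHn] P cardP.
  have P0 : P =1 pred0 by apply/card0_eq.
  under eq_fun do rewrite (eq_bigl _ _ P0) big_pred0_eq.
  by rewrite (eq_bigl _ _ P0) big_pred0_eq; exact: is_derive_cst.
have [i0 Pi0] : exists i0, i0 \in P by apply/card_gt0P; rewrite cardP.
have cardP' : #|[pred i | P i && (i != i0)]| = n.
  move: cardP; rewrite (cardD1 i0) Pi0 add1n => -[<-].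
  by apply: eq_card => i; rewrite !inE andbC.
under eq_fun do rewrite (bigD1 i0) //=.
have := is_deriveM (hd i0) (IHn _ cardP').
rewrite /= => /is_derive_eq; apply; rewrite /GRing.scale /=.
rewrite [RHS](bigD1 i0) //= addrC; congr (_ + _); last exact: mulrC.
rewrite mulr_sumr; apply: eq_bigr => i /andP[Pi ni0].
rewrite [in RHS](bigD1 i0) /=; last by rewrite eq_sym ni0 andbT.
rewrite mulrCA; congr (_ * (_ * _)).
by apply: eq_bigl => j; rewrite andbAC.
Qed.

End DeriveRules.

Lemma perm_moves_other (J : finType) (s : {perm J}) (i : J) :
  s != 1%g -> exists2 j, j != i & s j != j.
Proof.
move=> s1; have [k sk] : exists k, s k != k.
  apply/existsP; apply: contraR s1 => /existsPn fix_s.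
  by apply/eqP/permP => k; rewrite perm1; apply/eqP/negPn.
have [ki|] := eqVneq k i; last by exists k.
exists (s k); first by rewrite -ki.
by apply: contra sk => /eqP/perm_inj ->.
Qed.

Lemma is_derive_det_at1 (R : numFieldType) n (F : R -> 'M[R]_n) (dF : 'M[R]_n) :
  (forall i j, is_derive (0 : R) 1 (fun t => F t i j) (dF i j)) -> F 0 = 1%:M ->
  is_derive (0 : R) 1 (fun t => \det (F t)) (\tr dF).
Proof.
move=> dFij F0.
have := is_derive_sumr predT (fun s : 'S_n => is_derive_mull ((-1) ^+ s)
  (is_derive_prodr predT (h := fun i t => F t i (s i)) (fun i => dFij i (s i)))).
move=> /is_derive_eq; apply; rewrite F0 (bigD1 (1%g : 'S_n)) //= odd_perm1 mul1r.
rewrite [X in _ + X]big1 ?addr0 => [|s s1].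
  apply: eq_bigr => i _; rewrite perm1 big1 ?mulr1 // => j /= ji.
  by rewrite perm1 mxE eqxx.
rewrite big1 ?mulr0 // => i _; have [j ji sj] := perm_moves_other i s1.
by rewrite (bigD1 j) //= mxE eq_sym (negbTE sj) mul0r mulr0.
Qed.

Section Gram.
Variable R : rcfType.

Lemma mxtrace_trmx_mul p q (A B : 'M[R]_(p, q)) :
  \tr (A^T *m B) = \sum_i \sum_j A i j * B i j.
Proof.
rewrite /mxtrace exchange_big; apply: eq_bigr => j _; rewrite mxE.
by apply: eq_bigr => i _; rewrite mxE.
Qed.

Lemma mxtrace_gram_ge0 p q (A : 'M[R]_(p, q)) : 0 <= \tr (A^T *m A).
Proof.
by rewrite mxtrace_trmx_mul; do 2!apply: sumr_ge0 => ? _; rewrite -expr2 sqr_ge0.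
Qed.

Lemma mxtrace_gram_eq0 p q (A : 'M[R]_(p, q)) : \tr (A^T *m A) = 0 -> A = 0.
Proof.
have sq_ge0 (a : R) : 0 <= a * a by rewrite -expr2 sqr_ge0.
rewrite mxtrace_trmx_mul => /psumr_eq0P A0; apply/matrixP => i j; rewrite mxE.
have row_ge0 k : 0 <= \sum_l A k l * A k l by apply: sumr_ge0 => l _.
have /psumr_eq0P Ai0 := A0 (fun k _ => row_ge0 k) i isT.
have /eqP := Ai0 (fun k _ => sq_ge0 _) j isT.
by rewrite mulf_eq0 orbb => /eqP.
Qed.

Lemma gram_convex_unitmx m k (X : 'M[R]_(m, k)) (s : R) :
  \rank X = k -> 0 <= s <= 1 -> s *: (X^T *m X) + (1 - s) *: 1%:M \in unitmx.
Proof.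
move=> rkX /andP[s_ge0 s_le1]; set M := _ + _.
rewrite -row_free_unit -kermx_eq0; apply/eqP; set K := kermx M.
have KM : K *m M = 0 by exact: mulmx_ker.
clearbody K; set Y := X *m K^T.
have quad : s * \tr (Y^T *m Y) + (1 - s) * \tr ((K^T)^T *m K^T) = 0.
  rewrite -!mxtraceZ -mxtraceD -[RHS](mxtrace0 R k) -(mul0mx _ K^T) -KM.
  rewrite /M mulmxDr mulmxDl -!scalemxAr -!scalemxAl trmxK mulmx1 trmx_mul trmxK.
  by rewrite !mulmxA.
have [sY0 K0] : s * \tr (Y^T *m Y) = 0 /\ (1 - s) * \tr ((K^T)^T *m K^T) = 0.
  move/eqP: quad; rewrite paddr_eq0 => [/andP[/eqP -> /eqP ->] //||].
    by rewrite mulr_ge0 ?mxtrace_gram_ge0.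
  by rewrite mulr_ge0 ?mxtrace_gram_ge0 ?subr_ge0.
have [s1|s_neq1] := eqVneq s 1.
  move: sY0; rewrite s1 mul1r => /mxtrace_gram_eq0 XKt0.
  have /eqP : K *m X^T = 0 by rewrite -[K]trmxK -trmx_mul -/Y XKt0 trmx0.
  have frXt : row_free X^T by rewrite /row_free mxrank_tr rkX.
  by rewrite mulmx_free_eq0 // => /eqP.
move/eqP: K0; rewrite mulf_eq0 subr_eq0 eq_sym (negbTE s_neq1) /=.
by move=> /eqP/mxtrace_gram_eq0 Kt0; rewrite -[K]trmxK Kt0 trmx0.
Qed.

Lemma gram_unitmx m k (X : 'M[R]_(m, k)) : \rank X = k -> X^T *m X \in unitmx.
Proof.
move=> rkX; have := gram_convex_unitmx rkX (s := 1); rewrite ler01 lexx.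
by rewrite scale1r subrr scale0r addr0; apply.
Qed.

Lemma gram_det_gt0 m k (X : 'M[R]_(m, k)) : \rank X = k -> 0 < \det (X^T *m X).
Proof.
move=> rkX; set A := X^T *m X.
pose Q : 'M[{poly R}]_k := \matrix_(i, j) ('X * (A i j)%:P + (1 - 'X) * (1%:M i j)%:P).
have detQE s : (\det Q).[s] = \det (s *: A + (1 - s) *: 1%:M).
  rewrite -horner_evalE -det_map_mx; congr (\det _).
  by apply/matrixP => i j; rewrite !mxE /= horner_evalE !hornerE.
(* s |-> det (s A + (1 - s) 1) is a polynomial with no root in [0, 1] and
   value 1 at 0, so it cannot be nonpositive at 1. *)
rewrite ltNge; apply/negP => detA_le0.
have [s /andP[s_ge0 s_le1] rootQ] : exists2 s, 0 <= s <= 1 & root (- \det Q) s.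
  apply: poly_ivt; first exact: ler01.
  rewrite !hornerN !detQE scale0r add0r subr0 scale1r det1 subrr scale0r addr0 scale1r.
  by rewrite oppr_le0 ler01 oppr_ge0.
have := gram_convex_unitmx rkX (s := s); rewrite s_ge0 s_le1 unitmxE unitfE -detQE.
by move: rootQ; rewrite /root hornerN oppr_eq0 => /eqP ->; rewrite eqxx => /(_ isT).
Qed.

End Gram.

Lemma mp_pinv_full_col (R : realType) m k (Y : 'M[R]_(m, k)) :
  \rank Y = k -> mp_pinv Y = invmx (Y^T *m Y) *m Y^T.
Proof.
move=> rkY; have G_unit := gram_unitmx rkY; set Gi := invmx (Y^T *m Y).
have GiT : Gi^T = Gi by rewrite trmx_inv trmx_mul trmxK.
have GiY : Gi *m Y^T *m Y = 1%:M by rewrite -mulmxA mulVmx.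
have PY : Y *m (Gi *m Y^T) *m Y = Y by rewrite -mulmxA GiY mulmx1.
have PT : (Y *m (Gi *m Y^T))^T = Y *m (Gi *m Y^T).
  by rewrite !trmx_mul trmxK GiT mulmxA.
have penroseGi : penrose Y (Gi *m Y^T).
  by split; rewrite ?PY ?PT ?GiY ?mul1mx ?trmx1.
rewrite /mp_pinv; case: pselect => [ex_pinv|]; last by case; exists (Gi *m Y^T).
case: (cid ex_pinv) => B [YBY BYB YBT _] /=.
(* The Penrose conditions force B Y = 1 and Y B = Y Gi Y^T, so B = B Y B = Gi Y^T. *)
have YB : Y *m B = Y *m (Gi *m Y^T).
  have -> : Y *m B = (Y *m (Gi *m Y^T) *m (Y *m B))^T by rewrite mulmxA PY YBT.
  by rewrite trmx_mul YBT PT !mulmxA YBY.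
have BY : B *m Y = 1%:M.
  rewrite -[B]mul1mx -GiY -!mulmxA [Y *m (B *m Y)]mulmxA YBY.
  by rewrite !mulmxA.
by rewrite -BYB -mulmxA YB mulmxA BY mul1mx.
Qed.

Lemma is_derive_mulmx_gram (R : numFieldType) m k (A : 'M[R]_k) (Y E : 'M[R]_(m, k))
    (i j : 'I_k) :
  is_derive (0 : R) 1 (fun t => (A *m ((Y + t *: E)^T *m (Y + t *: E))) i j)
    ((A *m (Y^T *m E + E^T *m Y)) i j).
Proof.
have -> : (fun t => (A *m ((Y + t *: E)^T *m (Y + t *: E))) i j) =
    (fun t => \sum_(l | true) A i l *
       \sum_(p | true) ((Y p l + t * E p l) * (Y p j + t * E p j))).
  apply: funext => t; rewrite !mxE; apply: eq_bigr => l _; rewrite !mxE.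
  by congr (_ * _); apply: eq_bigr => p _; rewrite !mxE.
have := is_derive_sumr predT (fun l => is_derive_mull (A i l) (is_derive_sumr predT
  (fun p => is_deriveM (is_derive_affine 0 (Y p l) (E p l))
                       (is_derive_affine 0 (Y p j) (E p j))))).
move=> /is_derive_eq; apply; rewrite !mxE; apply: eq_bigr => l _; rewrite !mxE.
congr (_ * _); rewrite -big_split; apply: eq_bigr => p _.
by rewrite !mxE !mul0r !addr0 /GRing.scale /= [Y p j * _]mulrC.
Qed.

Lemma is_derive_ln_det_gram (R : realType) m k (Y E : 'M[R]_(m, k)) : \rank Y = k ->
  is_derive (0 : R) 1 (fun t => ln (\det ((Y + t *: E)^T *m (Y + t *: E))))
    (2 * \tr (E^T *m (Y *m invmx (Y^T *m Y)))).
Proof.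
move=> rkY; set G := Y^T *m Y; set Gi := invmx G.
have G_unit := gram_unitmx rkY; have detG_gt0 := gram_det_gt0 rkY.
(* Normalising by G^-1 reduces to Jacobi's formula at the identity. *)
pose F t := Gi *m ((Y + t *: E)^T *m (Y + t *: E)).
have detF t : \det ((Y + t *: E)^T *m (Y + t *: E)) = \det G * \det (F t).
  by rewrite -det_mulmx /F mulmxA mulmxV // mul1mx.
have F0 : F 0 = 1%:M by rewrite /F scale0r addr0 mulVmx.
have ddet := is_derive_mull (\det G) (is_derive_det_at1 (is_derive_mulmx_gram Gi Y E) F0).
have dln : is_derive ((fun t => \det G * \det (F t)) 0) 1 (@ln R) (\det G)^-1.
  by rewrite /= F0 det1 mulr1; apply: is_derive1_ln.
under eq_fun do rewrite detF.
have := @is_derive1_comp R (@ln R) (fun t => \det G * \det (F t)) 0 _ _ dln ddet.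
move=> /is_derive_eq; apply.
have GiT : Gi^T = Gi by rewrite trmx_inv trmx_mul trmxK.
have trYtE : \tr (Gi *m (Y^T *m E)) = \tr (E^T *m (Y *m Gi)).
  by rewrite -mxtrace_tr !trmx_mul GiT trmxK !mulmxA.
have trEtY : \tr (Gi *m (E^T *m Y)) = \tr (E^T *m (Y *m Gi)).
  by rewrite mxtrace_mulC !mulmxA.
rewrite mulKf ?gt_eqF // mulmxDr mxtraceD trYtE trEtY.
by rewrite mulr_natl mulr2n.
Qed.

Section Loss.
Variables (R : realType) (N : nat) (I : 'I_N -> nat) (Rk : nat).
Variables (T : tensor R I) (X : factors R I Rk).

Lemma is_derive_tfit (E : factors R I Rk) :
  is_derive (0 : R) 1 (fun t => tfit T (fun n => X n + t *: E n))
    (\sum_n \tr ((E n)^T *m mttkrp T X n)).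
Proof.
have -> : (fun t => tfit T (fun n => X n + t *: E n)) = (fun t => \sum_(r | true)
    \sum_(idx : midx I | true) T idx *
      \prod_(n | true) (X n (idx n) r + t * E n (idx n) r)).
  apply: funext => t; apply: eq_bigr => r _; apply: eq_bigr => idx _.
  by congr (_ * _); apply: eq_bigr => n _; rewrite !mxE.
have := is_derive_sumr predT (fun r : 'I_Rk => is_derive_sumr predT
  (fun idx : midx I => is_derive_mull (T idx) (is_derive_prodr predT
     (fun n => is_derive_affine 0 (X n (idx n) r) (E n (idx n) r))))).
move=> /is_derive_eq; apply.
under eq_bigr do under eq_bigr do rewrite mulr_sumr.
under eq_bigr do rewrite exchange_big.
rewrite exchange_big; apply: eq_bigr => n _.
rewrite mxtrace_trmx_mul [RHS]exchange_big; apply: eq_bigr => r _.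
rewrite (partition_big (fun idx : midx I => idx n) predT) //.
apply: eq_bigr => a _; rewrite mxE mulr_sumr.
apply: eq_big => [idx|idx /eqP <-] //.
rewrite mulrCA; congr (_ * (_ * _)).
by apply: eq_big => // m; rewrite mul0r addr0.
Qed.

Definition lossL_grad (n : 'I_N) : 'M[R]_(I n, Rk) :=
  mttkrp T X n - X n *m invmx ((X n)^T *m X n).

Hypothesis rkX : forall n, \rank (X n) = Rk.

Lemma is_derive_lossL (E : factors R I Rk) :
  is_derive (0 : R) 1 (fun t => lossL T (fun n => X n + t *: E n))
    (\sum_n \tr ((E n)^T *m lossL_grad n)).
Proof.
have := is_deriveB (is_derive_tfit E) (is_derive_mull 2^-1
  (is_derive_sumr predT (fun n => is_derive_ln_det_gram (E n) (rkX n)))).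
move=> /is_derive_eq; apply.
rewrite mulr_sumr -sumrB; apply: eq_bigr => n _.
by rewrite mulrA mulVf ?pnatr_eq0 // mul1r mulmxBr raddfB.
Qed.

Lemma critical_iff :
  critical T X <-> forall n, mttkrp T X n = X n *m invmx ((X n)^T *m X n).
Proof.
have grad0E n : (lossL_grad n == 0) = (mttkrp T X n == X n *m invmx ((X n)^T *m X n)).
  exact: subr_eq0.
split=> [crit n | stat E].
  (* along the gradient itself, the derivative is a sum of squared norms *)
  have dL := is_derive_lossL lossL_grad.
  have [_] := crit lossL_grad; rewrite /= derive_val => /psumr_eq0P grad0.
  have /mxtrace_gram_eq0/eqP := grad0 (fun m _ => mxtrace_gram_ge0 _) n isT.
  by rewrite grad0E => /eqP.
have := is_derive_lossL E; split; first exact: ex_derive.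
rewrite derive_val big1 // => n _; have /eqP := stat n; rewrite -grad0E => /eqP ->.
by rewrite mulmx0 mxtrace0.
Qed.

End Loss.

Section Contractions.
Variables (R : realType) (N : nat) (I : 'I_N -> nat) (Rk : nat).
Variables (T : tensor R I) (X : factors R I Rk).

Lemma ztensor_mttkrp (p : 'I_N) (r : 'I_Rk) (j : {ffun 'I_N -> 'I_Rk}) :
  (forall m, m != p -> j m = r) ->
  ztensor T X j = ((X p)^T *m mttkrp T X p) (j p) r.
Proof.
move=> jE; rewrite /ztensor mxE (partition_big (fun idx : midx I => idx p) predT) //.
apply: eq_bigr => a _; rewrite !mxE mulr_sumr.
apply: eq_big => [//|idx /eqP <-].
rewrite (bigD1 p) //= mulrCA; congr (_ * (_ * _)).
by apply: eq_bigr => m mp; rewrite jE.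
Qed.

Lemma big_midx_agree_off (i : 'I_N) (idx : midx I) (b : 'I_(I i)) (F : midx I -> R) :
  \sum_(idx' : midx I | (idx' i == b) && [forall j, (j != i) ==> (idx j == idx' j)])
    F idx' = F (finfun (dfwith (fun j => idx j) b)).
Proof.
apply: big_pred1 => idx' /=; apply/andP/eqP => [[/eqP idx'_b /forallP agree]|->].
  apply/ffunP => j; rewrite ffunE; have [<-|ij] := eqVneq i j.
    by rewrite dfwith_in.
  by rewrite dfwith_out //; move/implyP: (agree j); rewrite eq_sym => /(_ ij)/eqP.
rewrite ffunE dfwith_in; split=> //; apply/forallP => j; apply/implyP => ji.
by rewrite ffunE dfwith_out // eq_sym.
Qed.

Lemma unfold_prod_cpd (i : 'I_N) :
  unfold_prod T (cpd X) i = mttkrp T X i *m (X i)^T.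
Proof.
apply/matrixP => a b; rewrite !mxE.
under eq_bigr => idx _ do rewrite big_midx_agree_off /cpd mulr_sumr.
rewrite exchange_big; apply: eq_bigr => r _; rewrite !mxE mulr_suml.
apply: eq_bigr => idx _; rewrite (bigD1 i) //= ffunE dfwith_in.
rewrite (eq_bigr (fun m => X m (idx m) r)) => [|m mi]; last first.
  by rewrite ffunE dfwith_out // eq_sym.
by rewrite [X i b r * _]mulrC mulrA.
Qed.

End Contractions.

Unset Implicit Arguments.

Theorem mainTheorem6 (R : realType) (N : nat) (I : 'I_N -> nat) (Rk : nat)
    (T : tensor R I) (X : factors R I Rk) :
  (forall n, (Rk <= I n)%N) ->
  (forall n, \rank (X n) = Rk) ->
  (critical T X <->
     (forall n, mttkrp T X n = X n *m invmx ((X n)^T *m X n)))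
  /\
  (critical T X ->
     [/\ (* (i) *)
         (forall (i : 'I_N) (r : 'I_Rk),
            exists c : 'cV[R]_Rk, col r (mttkrp T X i) = X i *m c),
         (* (ii) *)
         (forall (p : 'I_N) (r s : 'I_Rk) (j : {ffun 'I_N -> 'I_Rk}),
            (forall m, m != p -> j m = r) -> j p = s ->
            ztensor T X j = (r == s)%:R)
       & (* (iii) *)
         (forall i : 'I_N,
            unfold_prod T (cpd X) i = X i *m mp_pinv (X i))]).
Proof.
(* The size hypothesis is implied by the rank hypothesis. *)
move=> _ rkX; split; first exact: critical_iff.
move=> /(critical_iff T rkX) stat; split.
- move=> i r; exists (col r (invmx ((X i)^T *m X i))).
  by rewrite stat !colE mulmxA.
- move=> p r s j jE jp; rewrite (ztensor_mttkrp T X jE) stat mulmxA mulmxV ?gram_unitmx //.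
  by rewrite jp mxE eq_sym.
- by move=> i; rewrite unfold_prod_cpd stat mp_pinv_full_col // mulmxA.
Qed.
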